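(* Let $$\Gamma=\left\langle\mathbb{Z}^3,\left(0,\begin{pmatrix}1&-1&0\\0&-1&0\\0&0&-1\end{pmatrix}\right)\right\rangle\subseteq\mathrm{Aff}(\mathbb{R}^3).$$ Then $\mathrm{Spec}_R(\Gamma)=4\mathbb{N}\cup\{\infty\}$.
   Context: $\mathrm{Aff}(\mathbb{R}^3)=\mathbb{R}^3\rtimes\mathrm{GL}_3(\mathbb{R})$ with multiplication $(d_1,D_1)(d_2,D_2)=(d_1+D_1d_2,D_1D_2)$; $\mathbb{Z}^3$ denotes $\{(z,I_3)\mid z\in\mathbb{Z}^3\}$. $\mathbb{N}=\{1,2,3,\dots\}$, $4\mathbb{N}=\{4,8,12,\dots\}$. For an automorphism $\varphi$ of a group $G$, $R(\varphi)\in\mathbb{N}\cup\{\infty\}$ is the number of classes of the relation $g\sim g'\iff\exists h\in G: g=hg'\varphi(h)^{-1}$, and $\mathrm{Spec}_R(G)=\{R(\varphi)\mid\varphi\in\mathrm{Aut}(G)\}$. *)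

From mathcomp Require Import all_boot all_order all_algebra.
From Stdlib Require Import Rdefinitions.
From mathcomp Require Import Rstruct.
Set Implicit Arguments. Unset Strict Implicit. Unset Printing Implicit Defensive.
Import Order.TTheory GRing.Theory Num.Theory.
Local Open Scope ring_scope.

(* Elements of Aff(R^3) = R^3 ⋊ GL_3(R): pairs (d, D), D invertible. *)
Definition aff := ('cV[R]_3 * 'M[R]_3)%type.

Definition is_aff (g : aff) : Prop := g.2 \in unitmx.

Definition aff_mul (g h : aff) : aff := (g.1 + g.2 *m h.1, g.2 *m h.2).
Definition aff_one : aff := (0, 1%:M).
Definition aff_inv (g : aff) : aff := (- (invmx g.2 *m g.1), invmx g.2).

Definition transl (z : 'cV[int]_3) : aff := (map_mx (fun k : int => k%:~R) z, 1%:M).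

(* The matrix [[1,-1,0],[0,-1,0],[0,0,-1]] *)
Definition Amat : 'M[R]_3 :=
  \matrix_(i < 3, j < 3)
    (if (i == 0 :> nat) && (j == 0 :> nat) then 1
     else if (i == 0 :> nat) && (j == 1 :> nat) then -1
     else if (i == j) then -1 else 0).

Definition Agen : aff := (0, Amat).

Inductive Gamma : aff -> Prop :=
  | Gamma_transl (z : 'cV[int]_3) : Gamma (transl z)
  | Gamma_A : Gamma Agen
  | Gamma_mul g h : Gamma g -> Gamma h -> Gamma (aff_mul g h)
  | Gamma_inv g : Gamma g -> Gamma (aff_inv g).

(* φ is an automorphism of Γ (only its restriction to Γ matters). *)
Definition is_aut (phi : aff -> aff) : Prop :=
  (forall g, Gamma g -> Gamma (phi g)) /\
  (forall g h, Gamma g -> Gamma h -> phi (aff_mul g h) = aff_mul (phi g) (phi h)) /\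
  (forall g h, Gamma g -> Gamma h -> phi g = phi h -> g = h) /\
  (forall g', Gamma g' -> exists g, Gamma g /\ phi g = g').

Definition twisted (phi : aff -> aff) (g g' : aff) : Prop :=
  exists h, Gamma h /\ g = aff_mul (aff_mul h g') (aff_inv (phi h)).

Definition reid_classes (phi : aff -> aff) (n : nat) : Prop :=
  exists s : seq aff,
    size s = n /\
    (forall i : nat, (i < n)%nat -> Gamma (nth aff_one s i)) /\
    (forall i j : nat, (i < n)%nat -> (j < n)%nat -> i <> j ->
        ~ twisted phi (nth aff_one s i) (nth aff_one s j)) /\
    (forall g, Gamma g -> exists i : nat, (i < n)%nat /\ twisted phi g (nth aff_one s i)).

(* R(φ) ∈ N ∪ {∞}, encoded as option nat (None = ∞). *)
Definition reidemeister (phi : aff -> aff) (r : option nat) : Prop :=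
  match r with
  | Some n => reid_classes phi n
  | None => forall n, ~ reid_classes phi n
  end.

Definition SpecR_Gamma (r : option nat) : Prop :=
  exists phi, is_aut phi /\ reidemeister phi r.

Definition fourN_inf (r : option nat) : Prop :=
  match r with
  | Some n => (0 < n)%nat /\ dvdn 4 n
  | None => True
  end.

From mathcomp Require Import all_boot all_order all_algebra.
From mathcomp Require Import Rstruct ring lra zify.
From Stdlib Require Import Rdefinitions ClassicalEpsilon.
Set Implicit Arguments. Unset Strict Implicit. Unset Printing Implicit Defensive.
Import Order.TTheory GRing.Theory Num.Theory.
Local Open Scope ring_scope.

(* In coordinates [(p, q, r)] of the translation lattice, [Gamma] is [Z^3 x| Z/2] with the
   generator acting by [(p, q, r) |-> (q, p, -r)]. Translations are the centraliser of the
   squares, so an automorphism is [(z, b) |-> (M z + b d, b)] with [M] commuting with that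
   action; [M] acts on [p + q] by a sign [eps]. If [eps = 1], [p + q] is an unbounded twisted
   invariant and [R = oo]. If [eps = -1], the holonomy [b] and the parity of [p + q] are
   invariants, and on each of these four pieces the twisted classes are the orbits of a
   reflection [x |-> c - x] of a quotient [Z^2 / K_b Z^2]. A singular [K_b] gives [R = oo];
   otherwise counting orbits of involutions gives
   [R = |det K_0| + |det K_1| + (4 if nu is even else 0)], a multiple of 4 because both
   determinants are even with sum [2 +- 2]. Explicit automorphisms realise every [4k] and [oo]. *)

Record zvec := ZVec { zp : int; zq : int; zr : int }.

Definition vzero := ZVec 0 0 0.
Definition vadd (x y : zvec) := ZVec (zp x + zp y) (zq x + zq y) (zr x + zr y).
Definition vopp (x : zvec) := ZVec (- zp x) (- zq x) (- zr x).
Definition vswap (x : zvec) := ZVec (zq x) (zp x) (- zr x).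
Definition vact (b : bool) (x : zvec) := if b then vswap x else x.

Lemma zvec_ext x y : zp x = zp y -> zq x = zq y -> zr x = zr y -> x = y.
Proof. by case: x; case: y => /= ??? ??? -> -> ->. Qed.

Definition grp := (zvec * bool)%type.

Definition gunit : grp := (vzero, false).
Definition gmul (x y : grp) : grp := (vadd x.1 (vact x.2 y.1), x.2 (+) y.2).
Definition ginv (x : grp) : grp := (vopp (vact x.2 x.1), x.2).

Definition colZ (z : zvec) : 'cV[int]_3 :=
  \col_(i < 3) (if i == 0 :> nat then - zq z else if i == 1 :> nat then zp z - zq z else zr z).
Definition colR (z : zvec) : 'cV[R]_3 := map_mx (fun k : int => k%:~R) (colZ z).
Definition holo (b : bool) : 'M[R]_3 := if b then Amat else 1%:M.
Definition emb (x : grp) : aff := (colR x.1, holo x.2).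

Lemma sum3 (T : nmodType) (F : 'I_3 -> T) : \sum_(k < 3) F k = F 0 + F 1 + F 2%:R.
Proof.
rewrite !big_ord_recl big_ord0 addr0 addrA.
by congr (_ + _ + _); congr F; apply: val_inj.
Qed.

Lemma AmatK : Amat *m Amat = 1%:M.
Proof.
apply/matrixP => i j; rewrite !mxE sum3 !mxE.
by case: i => [[|[|[|i]]]] //= Hi; case: j => [[|[|[|j]]]] //= Hj; ring.
Qed.

Lemma invmx_Amat : invmx Amat = Amat.
Proof.
have Aunit : Amat \in unitmx by case: (mulmx1_unit AmatK).
by rewrite -[invmx Amat]mulmx1 -AmatK mulmxA mulVmx ?mul1mx.
Qed.

Lemma holo_mul b b' : holo b *m holo b' = holo (b (+) b').
Proof. by case: b; case: b' => /=; rewrite ?mulmx1 ?mul1mx ?AmatK. Qed.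

Lemma invmx_holo b : invmx (holo b) = holo b.
Proof. by case: b => /=; rewrite ?invmx_Amat ?invmx1. Qed.

Lemma colR_add x y : colR (vadd x y) = colR x + colR y.
Proof.
apply/matrixP => i j; rewrite !mxE.
by case: i => [[|[|[|i]]]] //= Hi; rewrite ?intrD ?intrN ?intrB; ring.
Qed.

Lemma colR_opp x : colR (vopp x) = - colR x.
Proof.
apply/matrixP => i j; rewrite !mxE.
by case: i => [[|[|[|i]]]] //= Hi; rewrite ?intrN; ring.
Qed.

Lemma colR0 : colR vzero = 0.
Proof. by apply/matrixP => i j; rewrite !mxE; case: i => [[|[|[|i]]]]. Qed.

Lemma holo_colR b z : holo b *m colR z = colR (vact b z).
Proof.
case: b => /=; last by rewrite mul1mx.
apply/matrixP => i j; rewrite !mxE sum3 !mxE.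
by case: i => [[|[|[|i]]]] //= Hi; rewrite ?intrD ?intrN ?intrB; ring.
Qed.

Lemma colR_inj : injective colR.
Proof.
move=> x y /matrixP E.
have := E 0 0; have := E 1 0; have := E 2%:R 0; rewrite !mxE /=.
move=> /intr_inj E2 /intr_inj E1 /intr_inj E0; apply: zvec_ext; lia.
Qed.

Lemma holo_inj : injective holo.
Proof.
by case; case => //= /matrixP E; have := E 1 1; rewrite !mxE /=; lra.
Qed.

Lemma emb_mul x y : aff_mul (emb x) (emb y) = emb (gmul x y).
Proof. by rewrite /aff_mul /emb /= holo_mul holo_colR colR_add. Qed.

Lemma emb_inv x : aff_inv (emb x) = emb (ginv x).
Proof. by rewrite /aff_inv /emb /= invmx_holo holo_colR colR_opp. Qed.

Lemma emb_inj : injective emb.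
Proof. by case=> z b [z' b'] [/colR_inj -> /holo_inj ->]. Qed.

Lemma Gamma_emb x : Gamma (emb x).
Proof.
case: x => z []; last exact: (Gamma_transl (colZ z)).
have -> : (z, true) = gmul (z, false) (vzero, true).
  by congr pair; apply: zvec_ext => /=; ring.
rewrite -emb_mul; apply: Gamma_mul; first exact: (Gamma_transl (colZ z)).
by rewrite /emb /= colR0; exact: Gamma_A.
Qed.

Lemma GammaP g : Gamma g -> exists x, g = emb x.
Proof.
elim => [z||g1 h1 _ [x ->] _ [y ->]|g1 _ [x ->]].
- exists (ZVec (z 1 0 - z 0 0) (- z 0 0) (z 2%:R 0), false).
  rewrite /emb /transl /=; congr pair; apply/matrixP => i j; rewrite !mxE (ord1 j).
  case: i => [[|[|[|i]]]] //= Hi; rewrite ?opprK ?subrK;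
    by congr (_%:~R); congr (z _ _); exact: val_inj.
- by exists (vzero, true); rewrite /emb /= colR0.
- by exists (gmul x y); rewrite emb_mul.
- by exists (ginv x); rewrite emb_inv.
Qed.

Definition gaut (F : grp -> grp) :=
  [/\ forall x y, F (gmul x y) = gmul (F x) (F y), injective F & forall y, exists x, F x = y].

Definition transports (phi : aff -> aff) (F : grp -> grp) := forall x, phi (emb x) = emb (F x).

Definition gtwisted (F : grp -> grp) (x y : grp) := exists h, x = gmul (gmul h y) (ginv (F h)).

Lemma aut_restrict phi : is_aut phi -> exists F, gaut F /\ transports phi F.
Proof.
case=> phiG [phiM [phi_inj phi_surj]].
have phi_emb x : exists y, phi (emb x) = emb y by apply/GammaP/phiG/Gamma_emb.
pose F x := proj1_sig (constructive_indefinite_description _ (phi_emb x)).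
have autE : transports phi F by move=> x; rewrite /F; case: constructive_indefinite_description.
exists F; split => //; rewrite /gaut; split.
- by move=> x y; apply: emb_inj; rewrite -autE -!emb_mul -!autE phiM //; apply: Gamma_emb.
- by move=> x y E; apply/emb_inj/phi_inj; rewrite ?autE ?E //; apply: Gamma_emb.
- move=> y; have [g [/GammaP [x ->] Ex]] := phi_surj _ (Gamma_emb y).
  by exists x; apply: emb_inj; rewrite -autE.
Qed.

Lemma aut_extend F : gaut F -> exists phi, is_aut phi /\ transports phi F.
Proof.
case=> FM F_inj F_surj.
pose phi g := match excluded_middle_informative (exists x, g = emb x) with
  | left e => emb (F (proj1_sig (constructive_indefinite_description _ e)))
  | right _ => g end.
have phiE : transports phi F.
  move=> x; rewrite /phi; case: excluded_middle_informative => [e|[]]; last by exists x.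
  by case: constructive_indefinite_description => y /= /emb_inj <-.
exists phi; split => //; split; [|split; [|split]].
- by move=> g /GammaP [x ->]; rewrite phiE; apply: Gamma_emb.
- by move=> g h /GammaP [x ->] /GammaP [y ->]; rewrite emb_mul !phiE FM emb_mul.
- by move=> g h /GammaP [x ->] /GammaP [y ->]; rewrite !phiE => /emb_inj/F_inj ->.
- move=> g /GammaP [y ->]; have [x <-] := F_surj y.
  by exists (emb x); rewrite phiE; split; first apply: Gamma_emb.
Qed.

Section Reidemeister.
Variables (phi : aff -> aff) (F : grp -> grp).
Hypothesis phiF : transports phi F.

Lemma twisted_emb x y : twisted phi (emb x) (emb y) <-> gtwisted F x y.
Proof.
split.
- by case=> g [/GammaP [h ->] E]; exists h; apply: emb_inj; rewrite E phiF emb_inv !emb_mul.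
- by case=> h E; exists (emb h); rewrite phiF emb_inv !emb_mul -E; split; first apply: Gamma_emb.
Qed.

Lemma reid_classes_reps (n : nat) (s : seq aff) :
  (forall i : nat, (i < n)%nat -> Gamma (nth aff_one s i)) ->
  exists x : 'I_n -> grp, forall i : 'I_n, nth aff_one s i = emb (x i).
Proof.
move=> sG; have x_ex (i : 'I_n) : exists x, nth aff_one s i = emb x by apply/GammaP/sG.
exists (fun i => proj1_sig (constructive_indefinite_description _ (x_ex i))).
by move=> i; case: constructive_indefinite_description.
Qed.

Lemma reid_classes_gt0 n : reid_classes phi n -> (0 < n)%nat.
Proof.
by case=> s [_ [_ [_ /(_ _ (Gamma_emb gunit)) [i [lt_i_n _]]]]]; apply: leq_ltn_trans lt_i_n.
Qed.

Lemma reid_classes_infinite (kap : grp -> nat) :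
    (forall x y, gtwisted F x y -> kap x = kap y) -> (forall B, exists x, (B < kap x)%nat) ->
  forall n, ~ reid_classes phi n.
Proof.
move=> kap_inv kap_unbounded n [s [_ [sG [_ s_cover]]]].
have [x sE] := reid_classes_reps sG.
have [y ltBy] := kap_unbounded (\max_(i < n) kap (x i)).
have [i [lt_i_n]] := s_cover _ (Gamma_emb y).
rewrite (sE (Ordinal lt_i_n)) => /twisted_emb/kap_inv kapE.
have := @leq_bigmax _ (fun i => kap (x i)) (Ordinal lt_i_n).
by rewrite /= -kapE leqNgt ltBy.
Qed.

Section CompleteInvariant.
Variables (Y : finType) (kap : grp -> Y) (S : {set Y}).
Hypotheses (kapP : forall x y, gtwisted F x y <-> kap x = kap y)
           (kap_in : forall x, kap x \in S) (kap_onto : forall y, y \in S -> exists x, kap x = y).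

Lemma reid_classes_card : reid_classes phi #|S|.
Proof.
have rep y : exists x, y \in S -> kap x = y.
  by case: (boolP (y \in S)) => [/kap_onto [x <-]|yNS]; [exists x | exists gunit].
pose r y := proj1_sig (constructive_indefinite_description _ (rep y)).
have rK y : y \in S -> kap (r y) = y.
  by rewrite /r; case: constructive_indefinite_description.
pose y0 := kap gunit.
have nthE i : (i < #|S|)%nat ->
    nth aff_one [seq emb (r y) | y <- enum S] i = emb (r (nth y0 (enum S) i)).
  by move=> lt_i; rewrite (nth_map y0) // -cardE.
have nth_in i : (i < #|S|)%nat -> nth y0 (enum S) i \in S.
  by move=> lt_i; rewrite -mem_enum mem_nth // -cardE.
exists [seq emb (r y) | y <- enum S]; split; first by rewrite size_map -cardE.
split; [|split].
- by move=> i lt_i; rewrite nthE //; apply: Gamma_emb.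
- move=> i j lt_i lt_j neq_ij; rewrite !nthE // => /twisted_emb/kapP.
  by rewrite !rK ?nth_in //; apply/eqP; rewrite nth_uniq ?enum_uniq -?cardE //; apply/eqP.
- move=> g /GammaP [x ->]; have kx_in : kap x \in enum S by rewrite mem_enum.
  exists (index (kap x) (enum S)); rewrite cardE index_mem nthE ?cardE ?index_mem //.
  by split => //; apply/twisted_emb/kapP; rewrite nth_index // rK // -mem_enum.
Qed.

Lemma reid_classes_uniq n : reid_classes phi n -> n = #|S|.
Proof.
case=> s [_ [sG [s_distinct s_cover]]]; have [x sE] := reid_classes_reps sG.
have kx_inj : injective (fun i => kap (x i)).
  move=> i j /kapP/twisted_emb; rewrite -!sE => ij_tw; apply: val_inj.
  case: (eqVneq (val i) (val j)) => // /eqP neq_ij.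
  by case: (s_distinct _ _ (ltn_ord i) (ltn_ord j) neq_ij ij_tw).
suff -> : S = [set kap (x i) | i : 'I_n] by rewrite card_imset // card_ord.
apply/setP => y; apply/idP/imsetP => [/kap_onto [z <-]|[i _ ->] //].
have [i [lt_i_n]] := s_cover _ (Gamma_emb z).
by rewrite (sE (Ordinal lt_i_n)) => /twisted_emb/kapP kzE; exists (Ordinal lt_i_n).
Qed.

End CompleteInvariant.
End Reidemeister.

Definition vscale (k : int) (x : zvec) := ZVec (k * zp x) (k * zq x) (k * zr x).

Lemma additive_int_scale (f : int -> zvec) :
  (forall a b, f (a + b) = vadd (f a) (f b)) -> forall k, f k = vscale k (f 1).
Proof.
move=> fD.
have f0 : f 0 = vzero.
  by have := fD 0 0; rewrite addr0; case: (f 0) => p q r /= [] *; apply: zvec_ext => /=; lia.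
have fn (n : nat) : f n%:Z = vscale n%:Z (f 1).
  elim: n => [|n IHn]; first by rewrite f0; apply: zvec_ext => /=; ring.
  by rewrite -addn1 PoszD fD IHn; apply: zvec_ext => /=; ring.
case=> n; first exact: fn.
have := fD (Negz n) (n.+1%:Z); rewrite NegzE addNr f0 fn.
case: (f (- n.+1%:Z)) => p q r; case: (f 1) => p1 q1 r1 /= [] *.
by apply: zvec_ext => /=; lia.
Qed.

Lemma gmul1g x : gmul gunit x = x.
Proof. by case: x => z b; congr pair; apply: zvec_ext => /=; ring. Qed.

Lemma gmul_idem x : gmul x x = x -> x = gunit.
Proof.
case: x => [[p q r] []]; rewrite /gmul /= => -[] // *.
by rewrite /gunit; congr pair; apply: zvec_ext => /=; lia.
Qed.

Lemma translP x : x.2 = false <-> forall h, gmul x (gmul h h) = gmul (gmul h h) x.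
Proof.
split.
- case: x => z b /= ->; case=> w c; rewrite /gmul /= addbb /=; congr pair.
  by case: c => /=; apply: zvec_ext => /=; ring.
- case: x => z [] //= /(_ (ZVec 0 0 1, false)); rewrite /gmul /= => -[] *; lia.
Qed.

(* [autP P] maps [(z, b)] to [(M z + b d, b)] with [d = (mu, -mu, nu)] and
   [M = [[a, eps - a, delta], [eps - a, a, -delta], [g, -g, e]]]; up to index 2, [M] is
   block triangular with diagonal blocks [eps] and [[2a - eps, delta], [2g, e]], the latter
   of determinant [pdet P]. *)
Record params :=
  Params { pa : int; peps : int; pg : int; pdelta : int; pe : int; pmu : int; pnu : int }.

Definition linP (P : params) (z : zvec) :=
  ZVec (pa P * zp z + (peps P - pa P) * zq z + pdelta P * zr z)
       ((peps P - pa P) * zp z + pa P * zq z - pdelta P * zr z)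
       (pg P * zp z - pg P * zq z + pe P * zr z).
Definition shiftP (P : params) := ZVec (pmu P) (- pmu P) (pnu P).
Definition autP (P : params) (x : grp) : grp :=
  (vadd (linP P x.1) (if x.2 then shiftP P else vzero), x.2).
Definition pdet (P : params) := (2 * pa P - peps P) * pe P - 2 * pg P * pdelta P.

Lemma autP_mul P x y : autP P (gmul x y) = gmul (autP P x) (autP P y).
Proof.
case: x => z b; case: y => z' b'; rewrite /autP /gmul /=; congr pair.
by case: b; case: b' => /=; apply: zvec_ext => /=; ring.
Qed.

Lemma gaut_autP P P' : autP P' \o autP P =1 id -> autP P \o autP P' =1 id -> gaut (autP P).
Proof.
move=> K1 K2; split; first exact: autP_mul.
- by move=> x y E; rewrite -[x]K1 -[y]K1 /= E.
- by move=> y; exists (autP P' y); apply: K2.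
Qed.

Section AutomorphismParams.
Variable F : grp -> grp.
Hypotheses (FM : forall x y, F (gmul x y) = gmul (F x) (F y)) (F_inj : injective F)
           (F_surj : forall y, exists x, F x = y).

Lemma aut_gunit : F gunit = gunit.
Proof. by apply: gmul_idem; rewrite -FM gmul1g. Qed.

Lemma aut_holo x : (F x).2 = x.2.
Proof.
have F_transl : x.2 = false -> (F x).2 = false.
  move/translP => tr; apply/translP => h; have [h' <-] := F_surj h.
  by rewrite -!FM tr.
have transl_F : (F x).2 = false -> x.2 = false.
  by move/translP => tr; apply/translP => h; apply: F_inj; rewrite !FM tr.
by case: x.2 (F x).2 F_transl transl_F => [] [] // => [_|] /(_ erefl).
Qed.

Definition aut_lin z := (F (z, false)).1.
Definition aut_shift := (F (vzero, true)).1.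

Lemma autE z b : F (z, b) = (vadd (aut_lin z) (if b then aut_shift else vzero), b).
Proof.
have FgE x : F x = ((F x).1, x.2) by rewrite -aut_holo; case: (F x).
have -> : (z, b) = gmul (z, false) (vzero, b) by congr pair; apply: zvec_ext => /=; ring.
rewrite FM FgE [F (vzero, b)]FgE /aut_lin /aut_shift; case: b => //=.
by rewrite -[(vzero, false)]/gunit aut_gunit.
Qed.

Lemma aut_lin0 : aut_lin vzero = vzero.
Proof. by rewrite /aut_lin -[(vzero, false)]/gunit aut_gunit. Qed.

Lemma aut_linD z z' : aut_lin (vadd z z') = vadd (aut_lin z) (aut_lin z').
Proof.
by rewrite /aut_lin -[(vadd z z', false)]/(gmul (z, false) (z', false)) FM /gmul /= aut_holo.
Qed.

Lemma aut_linZ k z : aut_lin (vscale k z) = vscale k (aut_lin z).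
Proof.
have scale1 : vscale 1 z = z by apply: zvec_ext => /=; ring.
have := @additive_int_scale (fun k => aut_lin (vscale k z)); rewrite /= scale1; apply=> a b.
by rewrite -aut_linD; congr aut_lin; apply: zvec_ext => /=; ring.
Qed.

Lemma aut_shift_sq : zp aut_shift + zq aut_shift = 0.
Proof.
have := FM (vzero, true) (vzero, true).
have -> : gmul (vzero, true) (vzero, true) = gunit by congr pair; apply: zvec_ext => /=; ring.
by rewrite aut_gunit autE aut_lin0 /gmul /= => -[] *; lia.
Qed.

Lemma aut_lin_swap z : aut_lin (vswap z) = vswap (aut_lin z).
Proof.
have swapE : gmul (vzero, true) (z, false) = gmul (vswap z, false) (vzero, true).
  by congr pair; apply: zvec_ext => /=; ring.
have := congr1 F swapE; rewrite !FM !autE aut_lin0 /gmul /= => -[] *.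
by apply: zvec_ext => /=; lia.
Qed.

Definition aut_params : params :=
  let: ZVec a b c := aut_lin (ZVec 1 0 0) in let: ZVec dl _ e := aut_lin (ZVec 0 0 1) in
  Params a (a + b) c dl e (zp aut_shift) (zr aut_shift).

Lemma aut_autP : F =1 autP aut_params.
Proof.
case=> z b; rewrite autE /autP /aut_params /shiftP /=; congr pair.
have lin_dec : aut_lin z = vadd (vscale (zp z) (aut_lin (ZVec 1 0 0)))
    (vadd (vscale (zq z) (aut_lin (vswap (ZVec 1 0 0)))) (vscale (zr z) (aut_lin (ZVec 0 0 1)))).
  by rewrite -!aut_linZ -!aut_linD; congr aut_lin; apply: zvec_ext => /=; ring.
have e3_swap : vswap (aut_lin (ZVec 0 0 1)) = vscale (-1) (aut_lin (ZVec 0 0 1)).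
  rewrite -aut_lin_swap -aut_linZ; congr aut_lin; apply: zvec_ext => /=; ring.
move: e3_swap; rewrite lin_dec aut_lin_swap; have := aut_shift_sq.
case: (aut_lin (ZVec 1 0 0)) => a1 b1 c1; case: (aut_lin (ZVec 0 0 1)) => a3 b3 c3.
case: aut_shift => d1 d2 d3 /= sq0 [] *.
by case: b => /=; apply: zvec_ext => /=; lia.
Qed.

End AutomorphismParams.

Lemma int_mul_eq1 (a b : int) : a * b = 1 -> a = 1 \/ a = -1.
Proof.
move=> ab1; have : a \is a intUnitRing.unitz by apply: (@intUnitRing.unitzPl a b); rewrite mulrC.
lia.
Qed.

Lemma autP_surj_units P : (forall y, exists x, autP P x = y) ->
  (peps P = 1 \/ peps P = -1) /\ (pdet P = 1 \/ pdet P = -1).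
Proof.
move=> surj.
have lin_surj y : exists z, vadd (linP P z) vzero = y.
  have [[z b] [Ez b0]] := surj (y, false).
  by exists z; case: b Ez b0.
have eps_unit : peps P = 1 \/ peps P = -1.
  have [[p q r] [E1 E2 E3]] := lin_surj (ZVec 1 0 0).
  by apply: (@int_mul_eq1 _ (p + q)); lia.
split => //.
(* Preimages of [(1, -1, 0)] and [(0, 0, 1)] give an integral right inverse of the block of
   determinant [pdet P]. *)
have [[x1 q1 y1] [E1 E2 E3]] := lin_surj (ZVec 1 (-1) 0).
have [[x2 q2 y2] [E4 E5 E6]] := lin_surj (ZVec 0 0 1).
have [q1E q2E] : q1 = - x1 /\ q2 = - x2 by case: eps_unit => eps1; split; lia.
subst q1 q2.
apply: (@int_mul_eq1 _ (x1 * y2 - x2 * y1)); rewrite /pdet.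
move: E1 E2 E3 E4 E5 E6; case: P {surj lin_surj eps_unit} => a eps g dl e _ _ /= E1 E2 E3 E4 E5 E6.
have BX11 : (2 * a - eps) * x1 + dl * y1 = 1 by lia.
have BX21 : 2 * g * x1 + e * y1 = 0 by lia.
have BX12 : (2 * a - eps) * x2 + dl * y2 = 0 by lia.
have BX22 : 2 * g * x2 + e * y2 = 1 by lia.
have -> : ((2 * a - eps) * e - 2 * g * dl) * (x1 * y2 - x2 * y1) =
  ((2 * a - eps) * x1 + dl * y1) * (2 * g * x2 + e * y2) -
  ((2 * a - eps) * x2 + dl * y2) * (2 * g * x1 + e * y1) by ring.
by rewrite BX11 BX21 BX12 BX22; ring.
Qed.

Lemma gaut_classification F : gaut F -> exists P, F =1 autP P /\
  (peps P = 1 \/ peps P = -1) /\ (pdet P = 1 \/ pdet P = -1).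
Proof.
case=> FM F_inj F_surj; have FP := aut_autP FM F_inj F_surj.
exists (aut_params F); split => //; apply: autP_surj_units => y.
by have [x <-] := F_surj y; exists x; rewrite FP.
Qed.

Section InvolutionOrbits.
Variables (T : finType) (f : T -> T).
Hypothesis fK : involutive f.

Lemma orbit2_eq a b : ([set a; f a] == [set b; f b]) = (a == b) || (a == f b).
Proof.
apply/eqP/orP => [E|[/eqP -> //|/eqP ->]]; last by rewrite fK setUC.
by apply/orP; rewrite -in_set2 -E in_set2 eqxx.
Qed.

(* Orbits correspond to the [x] with [rank x <= rank (f x)]; this set and its image under [f]
   cover [T] and meet in the fixed points. *)
Lemma card_orbits_involution :
  (#|[set [set x; f x] | x : T]| * 2 = #|T| + #|[set x | f x == x]|)%nat.
Proof.
pose rk (x : T) : nat := enum_rank x.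
pose lo := [set x | (rk x <= rk (f x))%nat]; pose hi := [set x | (rk (f x) <= rk x)%nat].
have hiE : #|hi| = #|lo|.
  suff -> : hi = f @: lo by rewrite card_imset //; apply: inv_inj.
  apply/setP => y; apply/idP/imsetP => [|[x]]; rewrite !inE.
  - by exists (f y); rewrite ?inE fK.
  - by move=> le_x ->; rewrite fK.
have loUhi : #|lo :|: hi| = #|T|.
  by apply: eq_card => x; rewrite !inE leq_total.
have loIhi : #|lo :&: hi| = #|[set x | f x == x]|.
  apply: eq_card => x; rewrite !inE -eqn_leq; apply/idP/eqP => [/eqP|-> //].
  by move/val_inj/enum_rank_inj.
have orbitsE : #|[set [set x; f x] | x : T]| = #|lo|.
  rewrite -(card_in_imset (f := fun x => [set x; f x])).
  - apply: eq_card => S; apply/imsetP/imsetP => [[x _ ->]|[x _ ->]]; last by exists x.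
    case: (leqP (rk x) (rk (f x))) => [le|/ltnW le]; first by exists x; rewrite ?inE.
    by exists (f x); rewrite ?inE fK // setUC.
  move=> x y; rewrite !inE => le_x le_y /eqP; rewrite orbit2_eq => /orP [/eqP //|/eqP xE].
  rewrite {}xE fK in le_x *; apply/enum_rank_inj/val_inj/eqP.
  by rewrite eqn_leq le_x le_y.
by rewrite orbitsE -loUhi -loIhi cardsUI hiE muln2 addnn.
Qed.

End InvolutionOrbits.

Lemma card_sum_set (A B : finType) (X : {set A}) (Y : {set B}) :
  #|[set y : A + B | match y with inl a => a \in X | inr b => b \in Y end]| = (#|X| + #|Y|)%nat.
Proof.
rewrite -sum1_card big_sumType /= -!sum1_card.
by congr addn; apply: eq_bigl => a; rewrite inE.
Qed.

Lemma card_dep_pairs (A B : finType) (X : A -> {set B}) :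
  #|[set p : A * B | p.2 \in X p.1]| = \sum_(a : A) #|X a|.
Proof.
rewrite -sum1_card (eq_bigl (fun p => xpredT p.1 && (p.2 \in X p.1))); last first.
  by case=> a b; rewrite inE.
rewrite -(pair_big_dep xpredT (fun a b => b \in X a) (fun _ _ => 1%nat)).
by apply: eq_bigr => a _; rewrite sum1_card.
Qed.

Record mx2 := Mx2 { m11 : int; m12 : int; m21 : int; m22 : int }.

Definition det2 K := m11 K * m22 K - m12 K * m21 K.

Definition in_lattice K (v : int * int) :=
  exists k c : int, v.1 = m11 K * k + m12 K * c /\ v.2 = m21 K * k + m22 K * c.

Lemma in_lattice_opp K (v : int * int) : in_lattice K v -> in_lattice K (- v.1, - v.2).
Proof. by case=> k [c [-> ->]]; exists (- k), (- c); split => /=; ring. Qed.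

Lemma in_lattice_ext K (v w : int * int) :
  v.1 = w.1 -> v.2 = w.2 -> in_lattice K v -> in_lattice K w.
Proof. by case: v w => [? ?] [? ?] /= <- <-. Qed.

Definition bint (b : bool) : int := (nat_of_bool b)%:Z.

Lemma bint_mod2 (m : int) : 0 <= m < 2 -> bint (m == 1) = m.
Proof. by move=> m01; case: (m =P 1) => [->|/eqP m_neq1] //; rewrite /bint /=; lia. Qed.

Lemma bint_inj_mod2 a b (t : int) : bint a - bint b = 2 * t -> a = b.
Proof. by case: a; case: b; rewrite /bint /= => //; lia. Qed.

Section Lattice.
Variable K : mx2.

(* Hermite normal form: the lattice has the basis [(g, y), (0, h)]. *)
Definition lat_g := gcdz (m11 K) (m12 K).
Definition lat_u := projT1 (Bezoutz (m11 K) (m12 K)).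
Definition lat_v := proj1_sig (projT2 (Bezoutz (m11 K) (m12 K))).
Definition lat_a1 := divz (m11 K) lat_g.
Definition lat_a2 := divz (m12 K) lat_g.
Definition lat_D := lat_a1 * m22 K - lat_a2 * m21 K.
Definition lat_h := `|lat_D|.
Definition lat_y := lat_u * m21 K + lat_v * m22 K.

Lemma lat_bezout : lat_u * m11 K + lat_v * m12 K = lat_g.
Proof. by rewrite /lat_u /lat_v; case: (Bezoutz _ _) => u [v]. Qed.

Lemma lat_a1E : m11 K = lat_a1 * lat_g.
Proof. by rewrite /lat_a1 divzK // dvdz_gcdl. Qed.

Lemma lat_a2E : m12 K = lat_a2 * lat_g.
Proof. by rewrite /lat_a2 divzK // dvdz_gcdr. Qed.

Lemma det2_lat : det2 K = lat_g * lat_D.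
Proof. by rewrite /det2 /lat_D lat_a1E lat_a2E; ring. Qed.

Hypothesis det_neq0 : det2 K != 0.

Lemma lat_g_neq0 : lat_g != 0.
Proof. by apply: contraNneq det_neq0; rewrite det2_lat => ->; rewrite mul0r. Qed.

Lemma lat_g_gt0 : 0 < lat_g.
Proof. by rewrite lt_def lat_g_neq0 /lat_g /gcdz. Qed.

Lemma lat_h_gt0 : 0 < lat_h.
Proof. by rewrite normr_gt0; apply: contraNneq det_neq0; rewrite det2_lat => ->; rewrite mulr0. Qed.

Lemma lat_a_bezout : lat_u * lat_a1 + lat_v * lat_a2 = 1.
Proof. by apply: (mulIf lat_g_neq0); rewrite mul1r -{2}lat_bezout lat_a1E lat_a2E; ring. Qed.

Lemma lat_hD : exists2 sg : int, lat_h = sg * lat_D & sg * sg = 1.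
Proof.
case: (lerP 0 lat_D) => [D_ge0|D_lt0]; first by exists 1; rewrite ?mul1r // /lat_h ger0_norm.
by exists (-1); rewrite /lat_h ?ltr0_norm //; ring.
Qed.

Lemma in_latticeP (w : int * int) :
  in_lattice K w <-> exists t s : int, w.1 = lat_g * t /\ w.2 = lat_y * t + lat_h * s.
Proof.
have [sg hE sg2] := lat_hD; have ab := lat_a_bezout.
case: w => w1 w2; rewrite /in_lattice /=; split => [[k [c [-> ->]]]|[t [s [-> ->]]]].
- exists (lat_a1 * k + lat_a2 * c), (sg * (lat_u * c - lat_v * k)).
  rewrite lat_a1E lat_a2E hE /lat_y; split; first by ring.
  have -> : m21 K * k + m22 K * c = (m21 K * k + m22 K * c) * (lat_u * lat_a1 + lat_v * lat_a2).
    by rewrite ab mulr1.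
  by rewrite mulrACA sg2 mul1r /lat_y /lat_D; ring.
- exists (lat_u * t - lat_a2 * (sg * s)), (lat_v * t + lat_a1 * (sg * s)).
  rewrite lat_a1E lat_a2E hE /lat_y /lat_D; split; last by ring.
  by rewrite -[in LHS](mulr1 t) -ab; ring.
Qed.

Definition lat_div (w : int * int) := divz w.1 lat_g.
Definition lat_res1 (w : int * int) := modz w.1 lat_g.
Definition lat_res2 (w : int * int) := modz (w.2 - lat_y * lat_div w) lat_h.

Lemma lat_res_bounds w : 0 <= lat_res1 w < lat_g /\ 0 <= lat_res2 w < lat_h.
Proof.
have g_gt0 := lat_g_gt0; have h_gt0 := lat_h_gt0.
by rewrite /lat_res1 /lat_res2 !modz_ge0 ?lat_g_neq0 ?gt_eqF ?ltz_pmod.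
Qed.

Lemma lat_res_eq (w w' : int * int) :
  in_lattice K (w.1 - w'.1, w.2 - w'.2) <-> lat_res1 w = lat_res1 w' /\ lat_res2 w = lat_res2 w'.
Proof.
rewrite in_latticeP /lat_res1 /lat_res2 /lat_div; split => [[t [s [/= E1 E2]]]|[E1 E2]].
- have w1E : w.1 = t * lat_g + w'.1 by lia.
  have divE : divz w.1 lat_g = t + divz w'.1 lat_g by rewrite w1E divzMDl // lat_g_neq0.
  rewrite divE w1E modzMDl; split => //.
  have -> : w.2 - lat_y * (t + divz w'.1 lat_g) =
    s * lat_h + (w'.2 - lat_y * divz w'.1 lat_g) by lia.
  by rewrite modzMDl.
- set d := divz w.1 lat_g; set d' := divz w'.1 lat_g.
  set q := divz (w.2 - lat_y * d) lat_h; set q' := divz (w'.2 - lat_y * d') lat_h.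
  have D1 : w.1 - w'.1 = (d - d') * lat_g.
    by rewrite {1}(divz_eq w.1 lat_g) {1}(divz_eq w'.1 lat_g) E1; ring.
  have D2 : (w.2 - lat_y * d) - (w'.2 - lat_y * d') = (q - q') * lat_h.
    by rewrite {1}(divz_eq (w.2 - lat_y * d) lat_h) {1}(divz_eq (w'.2 - lat_y * d') lat_h) E2; ring.
  exists (d - d'), (q - q'); rewrite /= D1 [lat_h * _]mulrC -D2; split; ring.
Qed.

Definition lat_quot := ('I_(absz lat_g) * 'I_(absz lat_h))%type.

Lemma lat_res1_lt w : (absz (lat_res1 w) < absz lat_g)%nat.
Proof. by have [/andP [? ?] _] := lat_res_bounds w; lia. Qed.

Lemma lat_res2_lt w : (absz (lat_res2 w) < absz lat_h)%nat.
Proof. by have [_ /andP [? ?]] := lat_res_bounds w; lia. Qed.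

Definition lat_cls w : lat_quot := (Ordinal (lat_res1_lt w), Ordinal (lat_res2_lt w)).
Definition lat_rep (q : lat_quot) : int * int := ((q.1 : nat)%:Z, (q.2 : nat)%:Z).

Lemma lat_cls_eq w w' : lat_cls w = lat_cls w' <-> in_lattice K (w.1 - w'.1, w.2 - w'.2).
Proof.
rewrite lat_res_eq; have [/andP [? ?] /andP [? ?]] := lat_res_bounds w.
have [/andP [? ?] /andP [? ?]] := lat_res_bounds w'.
split => [[E1 E2]|[E1 E2]]; first by split; lia.
by congr pair; apply: val_inj; rewrite /= ?E1 ?E2.
Qed.

Lemma lat_repK q : lat_cls (lat_rep q) = q.
Proof.
case: q => [[i lt_i] [j lt_j]]; have g_gt0 := lat_g_gt0; have h_gt0 := lat_h_gt0.
have E1 : lat_res1 (i%:Z, j%:Z) = i by rewrite /lat_res1 modz_small //=; lia.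
have E0 : lat_div (i%:Z, j%:Z) = 0 by rewrite /lat_div divz_small //=; lia.
have E2 : lat_res2 (i%:Z, j%:Z) = j by rewrite /lat_res2 E0 mulr0 subr0 modz_small //=; lia.
by congr pair; apply: val_inj; rewrite /= ?E1 ?E2.
Qed.

Lemma lat_clsK w : in_lattice K ((lat_rep (lat_cls w)).1 - w.1, (lat_rep (lat_cls w)).2 - w.2).
Proof. by apply/lat_cls_eq; rewrite lat_repK. Qed.

Lemma card_lat_quot : #|{: lat_quot}| = absz (det2 K).
Proof. by rewrite card_prod !card_ord det2_lat abszM /lat_h; lia. Qed.

Lemma lat_cls_surj q : exists w, lat_cls w = q.
Proof. by exists (lat_rep q); apply: lat_repK. Qed.

Lemma lat_coords_eq0 (v1 v2 : int) :
  m11 K * v1 + m12 K * v2 = 0 -> m21 K * v1 + m22 K * v2 = 0 -> v1 = 0 /\ v2 = 0.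
Proof.
move=> E1 E2.
have D1 : det2 K * v1 = m22 K * (m11 K * v1 + m12 K * v2) - m12 K * (m21 K * v1 + m22 K * v2).
  by rewrite /det2; ring.
have D2 : det2 K * v2 = m11 K * (m21 K * v1 + m22 K * v2) - m21 K * (m11 K * v1 + m12 K * v2).
  by rewrite /det2; ring.
rewrite E1 E2 !mulr0 subr0 in D1 D2.
by move/eqP: D1; move/eqP: D2; rewrite !mulf_eq0 (negbTE det_neq0) => /eqP -> /eqP ->.
Qed.

Section Reflection.
Variable c : int * int.

Definition lat_refl q := lat_cls (c.1 - (lat_rep q).1, c.2 - (lat_rep q).2).

Lemma lat_refl_cls w : lat_refl (lat_cls w) = lat_cls (c.1 - w.1, c.2 - w.2).
Proof. by apply/lat_cls_eq; apply: in_lattice_ext (in_lattice_opp (lat_clsK w)) => /=; ring. Qed.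

Lemma lat_refl_involutive : involutive lat_refl.
Proof.
move=> q; have [w <-] := lat_cls_surj q; rewrite !lat_refl_cls.
by congr lat_cls; case: w => /= ? ?; congr pair; ring.
Qed.

(* Fixed points of [x |-> c - x] are the classes of [(c + K w) / 2] for [w] in [{0, 1}^2]. *)
Definition lat_shift (w : bool * bool) : int * int :=
  (c.1 + m11 K * bint w.1 + m12 K * bint w.2, c.2 + m21 K * bint w.1 + m22 K * bint w.2).
Definition even_shift w := (modz (lat_shift w).1 2 == 0) && (modz (lat_shift w).2 2 == 0).
Definition half_cls w := lat_cls (divz (lat_shift w).1 2, divz (lat_shift w).2 2).

Lemma even_halfE (x : int) : modz x 2 = 0 -> x = 2 * divz x 2.
Proof. by move=> x_even; rewrite {1}(divz_eq x 2) x_even addr0 mulrC. Qed.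

Lemma half_cls_fixed w : even_shift w -> lat_refl (half_cls w) = half_cls w.
Proof.
case/andP => /eqP/even_halfE E1 /eqP/even_halfE E2.
rewrite /half_cls lat_refl_cls; apply/lat_cls_eq; exists (- bint w.1), (- bint w.2).
by move: E1 E2; rewrite /lat_shift /=; move: (divz _ 2) (divz _ 2) => x1 x2 E1 E2; split; lia.
Qed.

Lemma lat_refl_fixed q : lat_refl q = q -> exists2 w, even_shift w & half_cls w = q.
Proof.
move=> fixq; set x := lat_rep q; have xq : lat_cls x = q by apply: lat_repK.
have : lat_cls (c.1 - x.1, c.2 - x.2) = lat_cls x by rewrite -lat_refl_cls xq.
case/lat_cls_eq => k [l [/= E1 E2]].
have D1 := divz_eq (- k) 2; have D2 := divz_eq (- l) 2.
have B1 : 0 <= modz (- k) 2 < 2 by rewrite modz_ge0 // ltz_pmod.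
have B2 : 0 <= modz (- l) 2 < 2 by rewrite modz_ge0 // ltz_pmod.
pose w := (modz (- k) 2 == 1, modz (- l) 2 == 1).
have shiftE : lat_shift w = ((x.1 - m11 K * divz (- k) 2 - m12 K * divz (- l) 2) * 2,
                             (x.2 - m21 K * divz (- k) 2 - m22 K * divz (- l) 2) * 2).
  rewrite /lat_shift /= !bint_mod2 //; move: D1 D2 E1 E2.
  move: (modz (- k) 2) (modz (- l) 2) (divz (- k) 2) (divz (- l) 2) => a b da db D1 D2 E1 E2.
  by congr pair; lia.
exists w; first by rewrite /even_shift shiftE !modzMl !eqxx.
rewrite /half_cls shiftE !mulzK // -xq; apply/lat_cls_eq.
by exists (- divz (- k) 2), (- divz (- l) 2); split => /=; ring.
Qed.

Lemma half_cls_inj w w' : even_shift w -> even_shift w' -> half_cls w = half_cls w' -> w = w'.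
Proof.
case/andP => /eqP/even_halfE E1 /eqP/even_halfE E2.
case/andP => /eqP/even_halfE E1' /eqP/even_halfE E2'.
case/lat_cls_eq => t [u [/= T1 T2]].
have [Z1 Z2] : bint w.1 - bint w'.1 - 2 * t = 0 /\ bint w.2 - bint w'.2 - 2 * u = 0.
  move: E1 E2 E1' E2' T1 T2; rewrite /lat_shift /=.
  move: (divz (c.1 + _ + _) 2) (divz (c.2 + _ + _) 2) => x1 x2.
  move: (divz (c.1 + _ + _) 2) (divz (c.2 + _ + _) 2) => x1' x2' E1 E2 E1' E2' T1 T2.
  apply: lat_coords_eq0.
  - have -> : m11 K * (bint w.1 - bint w'.1 - 2 * t) + m12 K * (bint w.2 - bint w'.2 - 2 * u) =
      (c.1 + m11 K * bint w.1 + m12 K * bint w.2) - (c.1 + m11 K * bint w'.1 + m12 K * bint w'.2)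
      - 2 * (m11 K * t + m12 K * u) by ring.
    by rewrite E1 E1' -T1; ring.
  - have -> : m21 K * (bint w.1 - bint w'.1 - 2 * t) + m22 K * (bint w.2 - bint w'.2 - 2 * u) =
      (c.2 + m21 K * bint w.1 + m22 K * bint w.2) - (c.2 + m21 K * bint w'.1 + m22 K * bint w'.2)
      - 2 * (m21 K * t + m22 K * u) by ring.
    by rewrite E2 E2' -T2; ring.
case: w w' Z1 Z2 {E1 E2 E1' E2' T1 T2} => a b [a' b'] /= Z1 Z2.
have a_eq : a = a' by apply: (@bint_inj_mod2 a a' t); lia.
have b_eq : b = b' by apply: (@bint_inj_mod2 b b' u); lia.
by rewrite a_eq b_eq.
Qed.

Lemma card_lat_refl_fixed : #|[set q | lat_refl q == q]| = #|[set w | even_shift w]|.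
Proof.
suff -> : [set q | lat_refl q == q] = half_cls @: [set w | even_shift w].
  by rewrite card_in_imset // => w w'; rewrite !inE; apply: half_cls_inj.
apply/setP => q; rewrite inE; apply/eqP/imsetP => [/lat_refl_fixed [w w_even <-]|[w]].
- by exists w; rewrite ?inE.
- by rewrite inE => /half_cls_fixed ? ->.
Qed.

Lemma lat_orbit_eq X X' :
  [set lat_cls X; lat_refl (lat_cls X)] = [set lat_cls X'; lat_refl (lat_cls X')] <->
  in_lattice K (X.1 - X'.1, X.2 - X'.2) \/ in_lattice K (X.1 + X'.1 - c.1, X.2 + X'.2 - c.2).
Proof.
have orbitE := orbit2_eq lat_refl_involutive.
split => [/eqP|lat]; first rewrite orbitE lat_refl_cls => /orP [] /eqP/lat_cls_eq lat.
- by left.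
- by right; apply: in_lattice_ext lat => /=; ring.
apply/eqP; rewrite orbitE lat_refl_cls; apply/orP.
by case: lat => lat; [left | right]; apply/eqP/lat_cls_eq; apply: in_lattice_ext lat => /=; ring.
Qed.

End Reflection.

Lemma card_even_shift_pair (c1 c2 : int) :
  modz (m11 K) 2 = 0 -> modz (m21 K) 2 = 0 -> modz (m22 K) 2 = 0 ->
  addn #|[set w | even_shift (c1, c2) w]| #|[set w | even_shift (c1 + 1, c2) w]| =
  if modz c2 2 == 0 then 4%nat else 0%nat.
Proof.
move=> E11 E21 E22.
set A := [set w | even_shift _ w]; set B := [set w | even_shift _ w].
have AUB : A :|: B = if modz c2 2 == 0 then setT else set0.
  apply/setP => w; rewrite !inE /even_shift /lat_shift /=.
  by case: (modz c2 2 =P 0) => c2_mod; rewrite ?inE; move: (bint w.1) (bint w.2) => x y; lia.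
have AIB : A :&: B = set0.
  apply/setP => w; rewrite !inE /even_shift /lat_shift /=.
  by move: (bint w.1) (bint w.2) => x y; lia.
rewrite -cardsUI AUB AIB cards0 addn0.
by case: (modz c2 2 == 0); rewrite ?cardsT ?cards0 // card_prod card_bool.
Qed.

End Lattice.

Lemma bint_inj : injective bint.
Proof. by case; case. Qed.

Lemma bint_bounds b : 0 <= bint b < 2.
Proof. by case: b. Qed.

Definition vhalf z := divz (zp z + zq z) 2.
Definition vpar z := modz (zp z + zq z) 2 == 1.

Lemma vhalfE z : zp z + zq z = 2 * vhalf z + bint (vpar z).
Proof. by rewrite /vhalf /vpar bint_mod2 ?modz_ge0 ?ltz_pmod // mulrC -divz_eq. Qed.

Definition twist_rel P (b : bool) z z' := exists w (hb : bool),
  z = vadd (vadd w (vopp (vact b (linP P w))))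
           (if hb then vadd (vswap z') (vopp (vact b (shiftP P))) else z').

Lemma gtwisted_autPE P z b z' b' :
  gtwisted (autP P) (z, b) (z', b') <-> b = b' /\ twist_rel P b z z'.
Proof.
split.
- case=> [[w hb]]; rewrite /gmul /ginv /autP /= => -[-> ->].
  split; first by case: hb; case: b'.
  by exists w, hb; case: hb; case: b' => /=; apply: zvec_ext => /=; ring.
- case=> <- [w [hb ->]]; exists (w, hb); rewrite /gmul /ginv /autP /=.
  congr pair; last by case: hb; case: b.
  by case: hb; case: b => /=; apply: zvec_ext => /=; ring.
Qed.

(* For [peps P = -1], [tw_coord P b] identifies the [z] with [p + q = s (mod 2)], modulo the
   image of [w |-> w - A^b M w], with [Z^2 / tw_lattice P b]; the twisted action of the
   elements [(w, true)] becomes the reflection about [tw_center P b s]. *)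
Definition tw_lattice P (b : bool) :=
  if b then Mx2 (2 + 2 * pa P) (pdelta P) (2 * pg P) (1 + pe P)
  else Mx2 (- (2 * pa P)) (- pdelta P) (- (2 * pg P)) (1 - pe P).
Definition tw_center P (b : bool) (s : int) : int * int :=
  if b then (s + pmu P, pnu P) else (s - pmu P, - pnu P).
Definition tw_coord P (b : bool) z : int * int :=
  if b then (zp z - (2 + pa P) * vhalf z, zr z - pg P * vhalf z)
  else (zp z - (1 - pa P) * vhalf z, zr z + pg P * vhalf z).

Lemma twist_relP P b z z' : peps P = -1 ->
  twist_rel P b z z' <-> vpar z = vpar z' /\
   (in_lattice (tw_lattice P b) ((tw_coord P b z).1 - (tw_coord P b z').1,
                                 (tw_coord P b z).2 - (tw_coord P b z').2) \/
    in_lattice (tw_lattice P b)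
      ((tw_coord P b z).1 + (tw_coord P b z').1 - (tw_center P b (bint (vpar z))).1,
       (tw_coord P b z).2 + (tw_coord P b z').2 - (tw_center P b (bint (vpar z))).2)).
Proof.
move=> eps_m1; have parE : vpar z = vpar z' <-> bint (vpar z) = bint (vpar z').
  by split=> [->|/bint_inj].
rewrite {}parE; have E1 := vhalfE z; have E2 := vhalfE z'.
have B1 := bint_bounds (vpar z); have B2 := bint_bounds (vpar z').
rewrite /twist_rel /in_lattice /tw_lattice /tw_center /tw_coord /linP /shiftP eps_m1.
move: E1 B1 E2 B2; move: (vhalf z) (bint (vpar z)) (vhalf z') (bint (vpar z')) => m s m' s'.
case: z => p q r; case: z' => p' q' r' /=.
case: P {eps_m1} => a _ g dl e mu nu E1 B1 E2 B2 /=.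
split.
- case=> [[x y c]] [hb]; case: hb; case: b => /= -[Hp Hq Hr]; subst p q r;
    (have Em : m = m' + x + y by lia); (have Es : s = s' by lia); subst m s; split => //.
  + by right; exists (- y - m'), c; split; lia.
  + by right; exists (- y - m'), c; split; lia.
  + by left; exists (- y), c; split; lia.
  + by left; exists (- y), c; split; lia.
- case=> Es [[k [c [H1 H2]]]|[k [c [H1 H2]]]]; subst s'.
  + by exists (ZVec (m - m' + k) (- k) c), false; case: b H1 H2 => /= H1 H2;
      apply: zvec_ext => /=; lia.
  + by exists (ZVec (m + k) (- k - m') c), true; case: b H1 H2 => /= H1 H2;
      apply: zvec_ext => /=; lia.
Qed.

Lemma det2_eq0_annihilator K : det2 K = 0 -> exists l1 l2 : int, ((l1 != 0) || (l2 != 0)) /\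
  l1 * m11 K + l2 * m21 K = 0 /\ l1 * m12 K + l2 * m22 K = 0.
Proof.
rewrite /det2 => det0.
have [col1|/norP [/negPn/eqP E21 /negPn/eqP E11]] := boolP ((m21 K != 0) || (m11 K != 0)).
  exists (m21 K), (- m11 K); rewrite oppr_eq0; split => //; split; first by ring.
  by rewrite -[RHS]oppr0 -det0; ring.
have [col2|/norP [/negPn/eqP E22 /negPn/eqP E12]] := boolP ((m22 K != 0) || (m12 K != 0)).
  by exists (m22 K), (- m12 K); rewrite oppr_eq0 E21 E11; split => //; split; ring.
by exists 1, 0; rewrite E11 E21 E12 E22; split => //; split; ring.
Qed.

Lemma in_lattice_annihilator K l1 l2 (v : int * int) :
  l1 * m11 K + l2 * m21 K = 0 -> l1 * m12 K + l2 * m22 K = 0 ->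
  in_lattice K v -> l1 * v.1 + l2 * v.2 = 0.
Proof.
move=> L1 L2 [k [c [-> ->]]].
have -> : l1 * (m11 K * k + m12 K * c) + l2 * (m21 K * k + m22 K * c) =
  (l1 * m11 K + l2 * m21 K) * k + (l1 * m12 K + l2 * m22 K) * c by ring.
by rewrite L1 L2; ring.
Qed.

Definition coord_lift (X : int * int) (s : bool) := ZVec X.1 (bint s - X.1) X.2.

Lemma vhalf_lift X s : vhalf (coord_lift X s) = 0.
Proof. by rewrite /vhalf /= addrC subrK; case: s; rewrite divz_small. Qed.

Lemma vpar_lift X s : vpar (coord_lift X s) = s.
Proof. by rewrite /vpar /= addrC subrK; case: s; rewrite modz_small. Qed.

Lemma tw_coord_lift P b X s : tw_coord P b (coord_lift X s) = X.
Proof. by rewrite /tw_coord vhalf_lift; case: b X => [] [x1 x2] /=; congr pair; ring. Qed.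

Lemma gtwisted_autP_sum P x y : peps P = 1 ->
  gtwisted (autP P) x y -> zp x.1 + zq x.1 = zp y.1 + zq y.1.
Proof.
move=> eps1; case: x y => z b [z' b'] /gtwisted_autPE [<- [w [hb ->]]].
by rewrite /linP /shiftP eps1; case: b; case: hb => /=; ring.
Qed.

Section InfiniteReidemeister.
Variables (phi : aff -> aff) (P : params).
Hypothesis phiP : transports phi (autP P).

Lemma reid_infinite_eps1 : peps P = 1 -> forall n, ~ reid_classes phi n.
Proof.
move=> eps1; apply: (reid_classes_infinite phiP (kap := fun x => absz (zp x.1 + zq x.1))).
- by move=> x y /(gtwisted_autP_sum eps1) ->.
- by move=> B; exists (ZVec B.+1 0 0, false) => /=; lia.
Qed.

(* An annihilator [l] of the degenerate lattice gives the unbounded invariant [|2 l.X - l.c|]. *)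
Lemma reid_infinite_det0 b : peps P = -1 -> det2 (tw_lattice P b) = 0 ->
  forall n, ~ reid_classes phi n.
Proof.
move=> eps_m1 /det2_eq0_annihilator [l1 [l2 [l_neq0 [L1 L2]]]].
pose lc := l1 * (tw_center P b 0).1 + l2 * (tw_center P b 0).2.
pose lX z := l1 * (tw_coord P b z).1 + l2 * (tw_coord P b z).2.
pose inv z : int := 2 * lX z - lc.
pose kap (x : grp) := if (x.2 == b) && ~~ vpar x.1 then absz (inv x.1) else 0%nat.
apply: (reid_classes_infinite phiP (kap := kap)).
- case=> z bx [z' by'] /gtwisted_autPE [<-]; rewrite /kap /=.
  have [->|//] := eqVneq bx b; move/(twist_relP _ _ _ eps_m1) => [-> lat].
  case: (vpar z') lat => //= lat; rewrite /inv /lX /lc.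
  case: lat => /(in_lattice_annihilator L1 L2) /=;
    move: (tw_coord P b z) (tw_coord P b z') (tw_center P b 0) => [X1 X2] [Y1 Y2] [C1 C2] /=; lia.
- move=> B; have l_pos : 1 <= l1 * l1 + l2 * l2 by nia.
  pose N : int := (B + absz lc + 1)%:Z.
  exists (coord_lift (N * l1, N * l2) false, b).
  rewrite /kap /= eqxx vpar_lift /inv /lX tw_coord_lift /=.
  have -> : l1 * (N * l1) + l2 * (N * l2) = N * (l1 * l1 + l2 * l2) by ring.
  have : N <= N * (l1 * l1 + l2 * l2) by nia.
  by move: (N * _) => M; rewrite /N; lia.
Qed.

End InfiniteReidemeister.

Section FiniteReidemeister.
Variables (phi : aff -> aff) (P : params).
Hypotheses (phiP : transports phi (autP P)) (eps_m1 : peps P = -1)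
           (det_neq0 : forall b, det2 (tw_lattice P b) != 0).

Definition tw_refl b s := lat_refl (det_neq0 b) (tw_center P b (bint s)).
Definition tw_cls b z := lat_cls (det_neq0 b) (tw_coord P b z).
Definition tw_orbit b z : {set lat_quot (tw_lattice P b)} :=
  [set tw_cls b z; tw_refl (vpar z) (tw_cls b z)].
Definition tw_orbits b s := [set [set q; tw_refl s q] | q : lat_quot (tw_lattice P b)].
Definition tw_classes b :=
  [set p : bool * {set lat_quot (tw_lattice P b)} | p.2 \in tw_orbits b p.1].

Definition class_of (x : grp) :=
  if x.2 as b return (bool * {set lat_quot (tw_lattice P false)}) +
                     (bool * {set lat_quot (tw_lattice P true)})
  then inr (vpar x.1, tw_orbit true x.1) else inl (vpar x.1, tw_orbit false x.1).
Definition classes :=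
  [set y | match y with inl p => p \in tw_classes false | inr p => p \in tw_classes true end].

Lemma tw_orbit_eq b z z' : (vpar z, tw_orbit b z) = (vpar z', tw_orbit b z') <-> twist_rel P b z z'.
Proof.
rewrite twist_relP //; split => [[par_eq]|[par_eq lat]].
- by rewrite /tw_orbit /tw_cls /tw_refl -par_eq => /lat_orbit_eq.
- by rewrite /tw_orbit /tw_cls /tw_refl -par_eq; congr pair; apply/lat_orbit_eq.
Qed.

Lemma class_ofP x y : gtwisted (autP P) x y <-> class_of x = class_of y.
Proof.
case: x y => z b [z' b']; rewrite gtwisted_autPE /class_of /=.
case: b; case: b' => /=; try by split=> [[]|].
- by rewrite -tw_orbit_eq; split=> [[_ ->] //|[-> ->]].
- by rewrite -tw_orbit_eq; split=> [[_ ->] //|[-> ->]].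
Qed.

Lemma tw_orbit_in b z : tw_orbit b z \in tw_orbits b (vpar z).
Proof. exact: imset_f. Qed.

Lemma tw_classes_onto b p : p \in tw_classes b -> exists z, (vpar z, tw_orbit b z) = p.
Proof.
case: p => s o; rewrite inE => /= /imsetP [q _ ->].
have [X <-] := lat_cls_surj (det_neq0 b) q.
by exists (coord_lift X s); rewrite /tw_orbit /tw_cls vpar_lift tw_coord_lift.
Qed.

Lemma class_of_in x : class_of x \in classes.
Proof.
case: x => z []; rewrite inE /= /tw_classes inE /=.
- exact: (@tw_orbit_in true).
- exact: (@tw_orbit_in false).
Qed.

Lemma class_of_onto y : y \in classes -> exists x, class_of x = y.
Proof.
rewrite inE; case: y => p /tw_classes_onto [z <-].
- by exists (z, false).
- by exists (z, true).
Qed.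

Lemma card_tw_orbits b s : (#|tw_orbits b s| * 2 = absz (det2 (tw_lattice P b)) +
  #|[set w | even_shift (tw_lattice P b) (tw_center P b (bint s)) w]|)%nat.
Proof.
rewrite card_orbits_involution ?card_lat_quot ?card_lat_refl_fixed //.
exact: lat_refl_involutive.
Qed.

Hypothesis pdet_unit : pdet P = 1 \/ pdet P = -1.

Lemma card_tw_classes b :
  (#|tw_classes b| * 2 =
   absz (det2 (tw_lattice P b)) * 2 + if modz (pnu P) 2 == 0 then 4 else 0)%nat.
Proof.
rewrite card_dep_pairs big_bool mulnDl !card_tw_orbits addnACA addnn -muln2 [X in (_ + X)%nat]addnC.
have [mu [nu [centerE nu_parity]]] : exists mu nu,
    (forall s, tw_center P b (bint s) = (bint s + mu, nu)) /\
    (modz nu 2 == 0) = (modz (pnu P) 2 == 0).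
  case: b; [exists (pmu P), (pnu P) | exists (- pmu P), (- pnu P)]; split; try lia;
    by move=> s; rewrite /tw_center; congr pair; ring.
have e_odd : modz (pe P) 2 = 1 by move: pdet_unit; rewrite /pdet eps_m1; lia.
rewrite !centerE (_ : bint true + mu = bint false + mu + 1); last by rewrite /bint /=; ring.
rewrite card_even_shift_pair ?nu_parity //; by case: b {centerE}; rewrite /tw_lattice /=; lia.
Qed.

Lemma card_classes :
  #|classes| = (absz (det2 (tw_lattice P false)) + absz (det2 (tw_lattice P true)) +
  if modz (pnu P) 2 == 0 then 4 else 0)%nat.
Proof.
rewrite card_sum_set; have := card_tw_classes false; have := card_tw_classes true.
by case: (modz (pnu P) 2 == 0); lia.
Qed.

Lemma reid_classes_autP n : reid_classes phi n <->
  n = (absz (det2 (tw_lattice P false)) + absz (det2 (tw_lattice P true)) +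
       if modz (pnu P) 2 == 0 then 4 else 0)%nat.
Proof.
rewrite -card_classes; split => [|->].
- exact: (reid_classes_uniq phiP class_ofP class_of_in class_of_onto).
- exact: (reid_classes_card phiP class_ofP class_of_in class_of_onto).
Qed.

End FiniteReidemeister.

(* Both determinants are even, so [|d0| + |d1| = d0 + d1 (mod 4)], and [d0 + d1 = 2 + 2 pdet P]. *)
Lemma reid_count_dvd4 P : peps P = -1 -> pdet P = 1 \/ pdet P = -1 ->
  (4 %| absz (det2 (tw_lattice P false)) + absz (det2 (tw_lattice P true)) +
        if modz (pnu P) 2 == 0 then 4 else 0)%nat.
Proof.
rewrite /pdet /det2 /tw_lattice /=; case: P => a _ g dl e _ nu /= -> det_unit.
by case: (modz nu 2 == 0); lia.
Qed.

Lemma SpecR_Gamma_finite n : SpecR_Gamma (Some n) -> (0 < n)%nat /\ (4 %| n)%nat.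
Proof.
case=> phi [/aut_restrict [F [/gaut_classification [P [FP [eps_unit det_unit]]] phiF]] phi_n].
split; first exact: reid_classes_gt0 phi_n.
have phiP : transports phi (autP P) by move=> x; rewrite phiF FP.
case: eps_unit => [eps1|eps_m1]; first by case: (reid_infinite_eps1 phiP eps1 phi_n).
have [det_false0|det_false] := eqVneq (det2 (tw_lattice P false)) 0.
  by case: (reid_infinite_det0 phiP eps_m1 det_false0 phi_n).
have [det_true0|det_true] := eqVneq (det2 (tw_lattice P true)) 0.
  by case: (reid_infinite_det0 phiP eps_m1 det_true0 phi_n).
have det_neq0 : forall b, det2 (tw_lattice P b) != 0 by case.
by move/(reid_classes_autP phiP eps_m1 det_neq0 det_unit): phi_n => ->; apply: reid_count_dvd4.
Qed.

(* The twisted lattices have determinants [-2k] and [2k], and [pnu = 1] is odd. *)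
Definition params_4k (k : int) := Params 0 (-1) k 1 (2 * k - 1) 0 1.
Definition params_4k_inv (k : int) := Params (- k) (-1) k 1 (-1) (-1) 1.
Definition params_id := Params 1 1 0 0 1 0 0.

Lemma SpecR_Gamma_4k (k : nat) : (0 < k)%nat -> SpecR_Gamma (Some (k * 4)%nat).
Proof.
move=> k_gt0; pose P := params_4k k.
have : gaut (autP P).
  by apply: (@gaut_autP _ (params_4k_inv k)) => -[z []]; congr pair; apply: zvec_ext => /=; ring.
case/aut_extend => phi [phi_aut phiP]; exists phi; split => //.
have det_neq0 : forall b, det2 (tw_lattice P b) != 0 by case; rewrite /det2 /=; lia.
have det_unit : pdet P = 1 \/ pdet P = -1 by right; rewrite /pdet /=; ring.
by apply/(reid_classes_autP phiP erefl det_neq0 det_unit); rewrite /det2 /=; lia.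
Qed.

Lemma SpecR_Gamma_infinite : SpecR_Gamma None.
Proof.
have : gaut (autP params_id).
  by apply: (@gaut_autP _ params_id) => -[z []]; congr pair; apply: zvec_ext => /=; ring.
case/aut_extend => phi [phi_aut phiP]; exists phi; split => //.
exact: reid_infinite_eps1 phiP _.
Qed.

Theorem proposition5p13 : forall r : option nat, SpecR_Gamma r <-> fourN_inf r.
Proof.
case=> [n|]; split => //=.
- exact: SpecR_Gamma_finite.
- case=> n_gt0 /dvdnP [k n_eq]; subst n; apply: SpecR_Gamma_4k.
  by move: n_gt0; rewrite muln_gt0 => /andP [].
- by move=> _; apply: SpecR_Gamma_infinite.
Qed.
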